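(* Let $J\ge2$ and let the configuration $\{(\iota_1,z_1^* ),\dots,(\iota_J,z_J^* )\}$ be non-degenerate. Then $|A^*\vec\lambda^D|\simeq\lambda_{\max}^D$ for all $\vec\lambda\in(0,\infty)^J$.
   Context: $N\ge7$, $D=\frac{N-2}2$. $\iota_i\in\{\pm1\}$, $z_1^*,\dots,z_J^*\in\mathbb{R}^N$ distinct. $A^*$ is the $J\times J$ matrix $A^*_{ij}=\mathbf 1_{i\ne j}\kappa_0\kappa_\infty\frac{\iota_i\iota_j}{|z_i^*-z_j^*|^{N-2}}$ with positive constants $\kappa_0=\frac{N-2}2\frac{\int W^{\frac{N+2}{N-2}}}{\int(x\cdot\nabla W+\frac{N-2}2W)^2}$, $\kappa_\infty=(N(N-2))^{\frac{N-2}2}$, $W(x)=(1+\frac{|x|^2}{N(N-2)})^{-\frac{N-2}2}$. Non-degenerate: $A^*$ has no nonzero kernel element in $[0,\infty)^J$. $\vec\lambda^D=(\lambda_1^D,\dots,\lambda_J^D)$, $\lambda_{\max}=\max_i\lambda_i$. Implicit constants may depend on $N$, $J$ and the configuration, not on $\vec\lambda$. *)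

From HB Require Import structures.
From mathcomp Require Import all_boot all_order all_algebra.
From mathcomp Require Import all_classical all_reals all_analysis.
Set Implicit Arguments. Unset Strict Implicit. Unset Printing Implicit Defensive.
Import Order.TTheory GRing.Theory Num.Theory.
Import numFieldNormedType.Exports.
Local Open Scope ring_scope.

Section Defs.
Variable R : realType.

(* Euclidean norm on R^N (the canonical norm on 'rV is the sup norm) *)
Definition enorm (n : nat) (x : 'rV[R]_n) : R := Num.sqrt (\sum_i x 0 i ^+ 2).

Definition enormc (n : nat) (v : 'cV[R]_n) : R := Num.sqrt (\sum_i v i 0 ^+ 2).

Definition Dexp (N : nat) : R := (N%:R - 2) / 2.

Definition Wbub (N : nat) (x : 'rV[R]_N) : R :=
  powR (1 + enorm x ^+ 2 / (N%:R * (N%:R - 2))) (- Dexp N).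

(* Iterated Lebesgue integral over R^n (Tonelli: for nonnegative measurable
   integrands it equals the Lebesgue integral over R^n). *)
Fixpoint iter_int (n : nat) (f : seq R -> \bar R) : \bar R :=
  match n with
  | 0 => f [::]
  | n'.+1 => (\int[@lebesgue_measure R]_(t in [set: R]) iter_int n' (fun s => f (t :: s)))%E
  end.

Definition integral_RN (N : nat) (f : 'rV[R]_N -> R) : \bar R :=
  iter_int N (fun s => (f (\row_i nth 0 s i))%:E).

(* kappa_0 = (N-2)/2 * int W^{(N+2)/(N-2)} / int (x.grad W + (N-2)/2 W)^2 ;
   x . grad W (x) is the directional derivative of W at x in direction x. *)
Definition kappa0 (N : nat) : R :=
  Dexp N *
  fine (integral_RN (fun x : 'rV[R]_N => powR (Wbub x) ((N%:R + 2) / (N%:R - 2)))) /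
  fine (integral_RN (fun x : 'rV[R]_N => (derive (@Wbub N) x x + Dexp N * Wbub x) ^+ 2)).

Definition kappa_inf (N : nat) : R := powR (N%:R * (N%:R - 2)) (Dexp N).

Definition Astar (N J : nat) (iota : 'I_J -> R) (z : 'I_J -> 'rV[R]_N) : 'M[R]_J :=
  \matrix_(i, j) (if i == j then 0
                 else kappa0 N * kappa_inf N * (iota i * iota j) /
                      enorm (z i - z j) ^+ (N - 2)).

Definition nondegenerate_config (N J : nat) (iota : 'I_J -> R) (z : 'I_J -> 'rV[R]_N) : Prop :=
  forall v : 'cV[R]_J, (forall i, 0 <= v i 0) -> Astar iota z *m v = 0 -> v = 0.

Definition lamD (N J : nat) (lam : 'I_J -> R) : 'cV[R]_J :=
  \col_i powR (lam i) (Dexp N).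

Definition lam_max (J : nat) (lam : 'I_J -> R) : R := \big[Num.max/0]_i lam i.

End Defs.

From HB Require Import structures.
From mathcomp Require Import all_boot all_order all_algebra.
From mathcomp Require Import all_classical all_reals all_analysis.
Set Implicit Arguments. Unset Strict Implicit. Unset Printing Implicit Defensive.
Import Order.TTheory GRing.Theory Num.Theory.
Import numFieldNormedType.Exports.
Local Open Scope classical_set_scope.
Local Open Scope ring_scope.

(* The map [v |-> |A v|] is positively homogeneous, so it suffices to bound it
   on the compact set of nonnegative vectors with entries at most 1 and entry
   sum at least 1, which contains [v / max_i v_i] for every nonnegative
   [v <> 0].  There it is continuous and, by non-degeneracy of [A], positive;
   its minimum and maximum give the two constants.  Finally the largest entry
   of [lambda^D] is [lambda_max^D] because [x |-> x^D] is nondecreasing. *)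

Section EuclideanNorm.
Variables (R : realType) (n : nat).

Lemma enormc0 : enormc (0 : 'cV[R]_n) = 0.
Proof. by rewrite /enormc big1 ?sqrtr0 // => i _; rewrite mxE expr0n. Qed.

Lemma enormc_eq0 (v : 'cV[R]_n) : (enormc v == 0) = (v == 0).
Proof.
apply/idP/eqP => [|->]; last by rewrite enormc0.
rewrite /enormc sqrtr_eq0 => sum_le0.
have /psumr_eq0P v0 : \sum_i v i 0 ^+ 2 = 0.
  by apply/eqP; rewrite eq_le sum_le0 sumr_ge0 // => i _; rewrite sqr_ge0.
apply/matrixP => i j; rewrite (ord1 j) mxE; apply/eqP.
by rewrite -sqrf_eq0 v0 // => k _; rewrite sqr_ge0.
Qed.

Lemma enormcZ (a : R) (v : 'cV[R]_n) : enormc (a *: v) = `|a| * enormc v.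
Proof.
rewrite /enormc -sqrtr_sqr -sqrtrM ?sqr_ge0 // mulr_sumr.
by congr Num.sqrt; apply: eq_bigr => i _; rewrite mxE exprMn.
Qed.

Lemma continuous_enormc_mulmx_tr (M : 'M[R]_n) :
  continuous (fun u : 'rV[R]_n => enormc (M *m u^T)).
Proof.
have entry_cont i : continuous (fun u : 'rV[R]_n => (M *m u^T) i 0).
  move=> u; under [X in continuous_at _ X]funext => w.
    by rewrite mxE; under eq_bigr do rewrite mxE; over.
  apply: (@continuous_big _ _ +%R 0 xpredT add_continuous) => j _ w.
  apply: (continuousM (s := fun=> M i j)); [exact: cst_continuous | exact: coord_continuous].
move=> u; apply: (continuous_comp _ (@sqrt_continuous R _)).
apply: (@continuous_big _ _ +%R 0 xpredT add_continuous) => i _ w.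
exact: (continuous_comp (entry_cont i w) (@exprn_continuous R 2 _)).
Qed.

End EuclideanNorm.

Section LamMax.
Variables (R : realType) (n : nat) (f : 'I_n -> R).

Lemma le_lam_max i : f i <= lam_max f.
Proof. exact: le_bigmax. Qed.

Lemma lam_max_ge0 : 0 <= lam_max f.
Proof. exact: bigmax_ge_id. Qed.

Lemma lam_max_attained : (0 < n)%N -> (forall i, 0 <= f i) ->
  exists k, lam_max f = f k.
Proof.
move=> n_gt0 f_ge0.
have [k _ max_k] := @eq_bigmax _ _ _ 0 (Ordinal n_gt0) xpredT f isT (fun i _ => f_ge0 i).
by exists k.
Qed.

Lemma lam_max_powR (p : R) : (0 < n)%N -> (forall i, 0 <= f i) -> 0 <= p ->
  lam_max (fun i => powR (f i) p) = powR (lam_max f) p.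
Proof.
move=> n_gt0 f_ge0 p_ge0; have [k max_k] := lam_max_attained n_gt0 f_ge0.
rewrite max_k; apply/eqP; rewrite eq_le le_bigmax andbT.
apply: bigmax_le => [|i _]; first exact: powR_ge0.
by apply: ge0_ler_powR; rewrite ?nnegrE // -max_k le_lam_max.
Qed.

End LamMax.

Section NonnegativeKernel.
Variables (R : realType) (n : nat).

Definition box_sum_ge1 : set 'rV[R]_n :=
  [set u | forall i, `[0, 1]%classic (u 0 i)] `&` [set u | 1 <= \sum_i u 0 i].

Lemma compact_box_sum_ge1 : compact box_sum_ge1.
Proof.
apply: compact_closedI.
  exact: (@rV_compact _ n (fun=> `[(0 : R), 1]%classic) (fun=> @segment_compact R 0 1)).
have sum_cont : continuous (fun u : 'rV[R]_n => \sum_i u 0 i).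
  apply: (@continuous_big _ _ +%R 0 xpredT add_continuous) => i _.
  exact: coord_continuous.
exact: (proj1 (continuous_closedP _) sum_cont _ (@closed_ge R 1)).
Qed.

Lemma box_sum_ge1_neq0 : (0 < n)%N -> box_sum_ge1 !=set0.
Proof.
move=> n_gt0; exists (const_mx 1); split => [i|] /=.
  by rewrite mxE in_itv /= ler01 lexx.
under eq_bigr do rewrite mxE.
by rewrite sumr_const card_ord -[X in X <= _]mulr1n ler_pMn2l.
Qed.

Lemma scaled_in_box_sum_ge1 (v : 'cV[R]_n) : (0 < n)%N ->
  (forall i, 0 <= v i 0) -> 0 < lam_max (v^~ 0) ->
  box_sum_ge1 ((lam_max (v^~ 0))^-1 *: v)^T.
Proof.
move=> n_gt0 v_ge0 max_gt0; have [k max_k] := lam_max_attained n_gt0 v_ge0.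
split => [i|] /=.
  rewrite !mxE in_itv /= mulr_ge0 ?invr_ge0 ?v_ge0 ?(ltW max_gt0) //=.
  by rewrite mulrC ler_pdivrMr // mul1r (le_lam_max (v^~ 0)).
rewrite (bigD1 k) //= !mxE max_k mulVf ?gt_eqF -?max_k // lerDl.
by apply: sumr_ge0 => i _; rewrite !mxE mulr_ge0 ?invr_ge0 ?v_ge0 ?(ltW max_gt0).
Qed.

Variable M : 'M[R]_n.
Hypothesis n_gt0 : (0 < n)%N.
Hypothesis M_nonneg_ker :
  forall v : 'cV[R]_n, (forall i, 0 <= v i 0) -> M *m v = 0 -> v = 0.

Lemma enormc_mulmx_gt0 (u : 'rV[R]_n) :
  box_sum_ge1 u -> 0 < enormc (M *m u^T).
Proof.
move=> [/= u01 sum_ge1]; rewrite lt_def sqrtr_ge0 andbT enormc_eq0.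
apply: contraTneq sum_ge1 => /M_nonneg_ker u0.
have {}u0 : u^T = 0.
  by apply: u0 => i; rewrite mxE; have /andP[] := u01 i.
rewrite -ltNge (eq_bigr (fun=> 0)) ?big1 ?ltr01 // => i _.
by have := congr1 (fun w : 'cV[R]_n => w i 0) u0; rewrite !mxE.
Qed.

Lemma nonneg_kernel_norm_equiv : exists c C : R, 0 < c /\ 0 < C /\
  forall v : 'cV[R]_n, (forall i, 0 <= v i 0) ->
    c * lam_max (v^~ 0) <= enormc (M *m v) /\
    enormc (M *m v) <= C * lam_max (v^~ 0).
Proof.
pose g u := enormc (M *m u^T).
have g_cont : {within box_sum_ge1, continuous g}.
  exact/continuous_subspaceT/continuous_enormc_mulmx_tr.
have box_neq0 := box_sum_ge1_neq0 n_gt0.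
have [umin /set_mem umin_box g_min] :=
  EVT_min_rV box_neq0 compact_box_sum_ge1 g_cont.
have [umax _ g_max] := EVT_max_rV box_neq0 compact_box_sum_ge1 g_cont.
have c_gt0 : 0 < g umin by apply: enormc_mulmx_gt0.
exists (g umin), (g umax); split=> //; split.
  by apply: lt_le_trans c_gt0 (g_max _ _); rewrite inE.
move=> v v_ge0; set m := lam_max (v^~ 0).
have [m0|m_gt0] := eqVneq m 0.
  have -> : v = 0.
    apply/matrixP => i j; rewrite (ord1 j) mxE; apply/eqP.
    by rewrite eq_le v_ge0 andbT -m0 (le_lam_max (v^~ 0)).
  by rewrite mulmx0 enormc0 m0 !mulr0.
have {}m_gt0 : 0 < m by rewrite lt_def m_gt0 lam_max_ge0.
have u_box : (m^-1 *: v)^T \in box_sum_ge1.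
  by rewrite inE; exact: scaled_in_box_sum_ge1.
have -> : M *m v = m *: (M *m ((m^-1 *: v)^T)^T).
  by rewrite trmxK -scalemxAr scalerA mulfV ?gt_eqF ?scale1r.
rewrite enormcZ gtr0_norm // -/(g _) ![_ * m]mulrC.
by split; rewrite ler_wpM2l ?(ltW m_gt0) ?g_min ?g_max.
Qed.

End NonnegativeKernel.

Lemma Dexp_ge0 (R : realType) (N : nat) : (2 <= N)%N -> 0 <= Dexp R N.
Proof. by move=> N_ge2; rewrite /Dexp divr_ge0 // subr_ge0 (ler_nat R 2). Qed.

Theorem lemma4p1 (R : realType) (N J : nat) (iota : 'I_J -> R) (z : 'I_J -> 'rV[R]_N) :
  (7 <= N)%N -> (2 <= J)%N ->
  (forall i, iota i = 1 \/ iota i = -1) ->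
  injective z ->
  nondegenerate_config iota z ->
  exists c C : R, 0 < c /\ 0 < C /\
    forall lam : 'I_J -> R, (forall i, 0 < lam i) ->
      c * powR (lam_max lam) (Dexp R N) <= enormc (Astar iota z *m lamD N lam) /\
      enormc (Astar iota z *m lamD N lam) <= C * powR (lam_max lam) (Dexp R N).
Proof.
(* Only non-degeneracy of [A^*] matters. *)
move=> N_ge7 J_ge2 _ _ nondeg.
have [c [C [c_gt0 [C_gt0 bound]]]] := nonneg_kernel_norm_equiv (ltnW J_ge2) nondeg.
exists c, C; do 2!split => //.
move=> lam lam_gt0; have lam_ge0 i : 0 <= lam i by exact: ltW.
have <- : lam_max ((lamD N lam)^~ 0) = powR (lam_max lam) (Dexp R N).
  rewrite -lam_max_powR ?(ltnW J_ge2) ?Dexp_ge0 ?(leq_trans _ N_ge7) //.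
  by apply: eq_bigr => i _; rewrite mxE.
by apply: bound => i; rewrite mxE powR_ge0.
Qed.
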